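(* Let $G=\{g_1,\dots,g_m\}$ be a finite group and let $\Gamma=(V,E)$ be a finite digraph (loops and multiple arcs allowed) with a voltage assignment $\alpha:E\to G$. Let $B_G$ be the $G$-representation matrix of $(\Gamma,\alpha)$, and define its powers by $B_G^{0}$ with $(B_G^0)_{uv}=\delta_{uv}e_1$ where $g_1$ is the identity and $e_1$ the corresponding unit vector, and $(B_G^{\ell+1})_{uv}=\sum_{w\in V}(B_G^{\ell})_{uw}\ast_G (B_G)_{wv}$. If $(B_G^\ell)_{uv}=(\beta_1,\dots,\beta_m)$, then for every $i=1,\dots,m$ and every $h\in G$ there are exactly $\beta_i$ walks of length $\ell$ in the lift $\Gamma^\alpha$ from vertex $(u,h)$ to vertex $(v,hg_i)$.
   Context: The lift $\Gamma^\alpha$ has vertex set $V\times G$, and for each arc $uv\in E$ and $g\in G$ an arc from $(u,g)$ to $(v,g\alpha(uv))$. For $a,b\in\mathbb{N}^m$ (indexed by the elements of $G$), their $G$-convolution is $a\ast_G b\in\mathbb{N}^m$ with $(a\ast_G b)_i=\sum_{j,k:\,g_jg_k=g_i}a_jb_k$. The $G$-representation matrix $B_G$ is the $V\times V$ matrix whose $uv$-entry is the vector $b_{uv}\in\mathbb{N}^m$ with $(b_{uv})_i$ equal to the number of arcs from $u$ to $v$ with voltage $g_i$. *)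

From mathcomp Require Import all_boot all_fingroup.
Set Implicit Arguments. Unset Strict Implicit. Unset Printing Implicit Defensive.
Local Open Scope group_scope.

(* A finite digraph with loops and multiple arcs: vertex type V, arc type E,
   tail/head maps src/tgt, voltage assignment alpha : E -> gT. The group G is
   the whole finite group gT. Vectors in N^m indexed by the elements of G are
   finite functions {ffun gT -> nat}. *)

Section Voltage.
Variables (gT : finGroupType) (V E : finType) (src tgt : E -> V) (alpha : E -> gT).

Definition gconv (a b : {ffun gT -> nat}) : {ffun gT -> nat} :=
  [ffun x => \sum_(y : gT) \sum_(z : gT | (y * z)%g == x) a y * b z]%N.

Definition repmx (u v : V) : {ffun gT -> nat} :=
  [ffun g => #|[set e : E | (src e == u) && (tgt e == v) && (alpha e == g)]|].

Fixpoint repmx_pow (l : nat) (u v : V) : {ffun gT -> nat} :=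
  match l with
  | 0 => [ffun g => nat_of_bool ((u == v) && (g == 1))]
  | l'.+1 => [ffun g => \sum_(w : V) gconv (repmx_pow l' u w) (repmx w v) g]%N
  end.

(* The lift Gamma^alpha: vertices V * gT; for each arc e and g an arc (e, g)
   from (src e, g) to (tgt e, g * alpha e). Arcs of the lift are E * gT. *)
Definition lift_src (a : E * gT) : V * gT := (src a.1, a.2).
Definition lift_tgt (a : E * gT) : V * gT := (tgt a.1, a.2 * alpha a.1).

Fixpoint is_walk (x : V * gT) (s : seq (E * gT)) (y : V * gT) : bool :=
  match s with
  | [::] => x == y
  | a :: s' => (lift_src a == x) && is_walk (lift_tgt a) s' y
  end.

Definition num_walks (l : nat) (x y : V * gT) : nat :=
  #|[set t : l.-tuple (E * gT) | is_walk x t y]|.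
End Voltage.

(** The lift's walk counts obey the same recursion as the powers of [B_G].
    Splitting off the last arc, a walk of length [l+1] from [(u,h)] to
    [(v,hg)] is a walk of length [l] from [(u,h)] to [(src e, h g alpha(e)^-1)]
    followed by the unique lifted copy of an arc [e] into [v] that ends at
    level [hg]; on the matrix side, the convolution with [(B_G)_{wv}] sums,
    over the arcs [e] from [w] to [v], the entry of [B_G^l] at [g alpha(e)^-1]. *)

From mathcomp Require Import all_boot all_fingroup.
Set Implicit Arguments. Unset Strict Implicit. Unset Printing Implicit Defensive.
Local Open Scope group_scope.

Section BigTupleRcons.
Variables (R : Type) (idx : R) (op : Monoid.com_law idx) (T : finType) (n : nat).

Lemma big_tuple_rcons (P : pred (n.+1.-tuple T)) (F : n.+1.-tuple T -> R) :
  \big[op/idx]_(t | P t) F t =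
  \big[op/idx]_(s : n.-tuple T) \big[op/idx]_(a | P [tuple of rcons s a])
     F [tuple of rcons s a].
Proof.
pose split_last (t : n.+1.-tuple T) :=
  ([tuple of belast (thead t) (behead t)], last (thead t) (behead t)).
have ht (t : n.+1.-tuple T) : val t = thead t :: behead t.
  exact: (congr1 val (tuple_eta t)).
rewrite pair_big_dep; apply: (reindex _); exists split_last => [[t a] _ | t _].
- have := ht [tuple of rcons t a]; rewrite lastI => /rcons_inj[Et Ea].
  by congr pair; [apply: val_inj; rewrite /= -Et | rewrite /= -Ea].
- by apply: val_inj; rewrite /= -lastI -ht.
Qed.

End BigTupleRcons.

Lemma big_mulg_eq (R : Type) (idx : R) (op : Monoid.law idx)
    (gT : finGroupType) (c d : gT) (F : gT -> R) :
  \big[op/idx]_(k | k * c == d) F k = F (d * c^-1).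
Proof. by apply: big_pred1 => k; rewrite /= (canF_eq (mulgK c)). Qed.

Section Voltage.
Variables (gT : finGroupType) (V E : finType) (src tgt : E -> V) (alpha : E -> gT).

Local Notation B := (repmx src tgt alpha).
Local Notation Bpow := (repmx_pow src tgt alpha).
Local Notation walks := (num_walks src tgt alpha).
Local Notation lsrc := (lift_src src).
Local Notation ltgt := (lift_tgt tgt alpha).

Lemma gconvE (a b : {ffun gT -> nat}) g :
  gconv a b g = \sum_z (a (g * z^-1)%g * b z)%N.
Proof.
rewrite ffunE (exchange_big_dep xpredT) //; apply: eq_bigr => z _.
exact: big_mulg_eq (fun y => a y * b z)%N.
Qed.

Lemma sum_mul_repmx (f : gT -> nat) w v :
  \sum_z (f z * B w v z)%N = \sum_(e | (src e == w) && (tgt e == v)) f (alpha e).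
Proof.
rewrite [RHS](partition_big alpha xpredT) //=; apply: eq_bigr => z _.
rewrite ffunE -sum1dep_card big_distrr /=.
by apply: eq_bigr => e /andP[_ /eqP ->]; rewrite muln1.
Qed.

Lemma repmx_powS l u v g :
  Bpow l.+1 u v g = \sum_(e | tgt e == v) Bpow l u (src e) (g * (alpha e)^-1)%g.
Proof.
rewrite ffunE [RHS](partition_big src xpredT) //=; apply: eq_bigr => w _.
rewrite gconvE sum_mul_repmx.
by apply: eq_big => [e | e /andP[/eqP -> _]]; rewrite // andbC.
Qed.

Lemma num_walks0 x y : walks 0 x y = (x == y).
Proof.
rewrite /num_walks -sum1dep_card big_mkcond (big_pred1 [tuple]) /=.
  by case: (x == y).
by move=> t; apply/esym/eqP; exact: tuple0.
Qed.

Lemma is_walk_rcons x s a y :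
  is_walk src tgt alpha x (rcons s a) y =
  is_walk src tgt alpha x s (lsrc a) && (ltgt a == y).
Proof. by elim: s x => [|b s IH] x /=; rewrite ?IH ?andbA // eq_sym. Qed.

Lemma num_walks_rcons l x y :
  walks l.+1 x y = \sum_(a | ltgt a == y) walks l x (lsrc a).
Proof.
rewrite /num_walks -sum1dep_card big_tuple_rcons (exchange_big_dep xpredT) //=.
rewrite [RHS]big_mkcond; apply: eq_bigr => a _.
under eq_bigl => t do rewrite is_walk_rcons.
case: (ltgt a == y); last by rewrite big_pred0 // => t; rewrite andbF.
by rewrite -sum1dep_card; apply: eq_bigl => t; rewrite andbT.
Qed.

Lemma num_walks_liftS l u h v g :
  walks l.+1 (u, h) (v, h * g) =
  \sum_(e | tgt e == v) walks l (u, h) (src e, h * (g * (alpha e)^-1))%g.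
Proof.
rewrite num_walks_rcons.
under [RHS]eq_bigr => e _.
  rewrite mulgA -(big_mulg_eq addn (alpha e) _ (fun k => walks l (u, h) (src e, k))).
  over.
rewrite pair_big_dep /=.
by apply: eq_bigl => -[e k]; rewrite /= xpair_eqE.
Qed.

End Voltage.

Theorem lemma4p2 (gT : finGroupType) (V E : finType) (src tgt : E -> V)
  (alpha : E -> gT) (l : nat) (u v : V) (g h : gT) :
  num_walks src tgt alpha l (u, h) (v, h * g) = repmx_pow src tgt alpha l u v g.
Proof.
elim: l v g => [|l IH] v g.
  rewrite num_walks0 ffunE xpair_eqE -{1}[h]mulg1 (inj_eq (mulgI h)).
  by rewrite [1 == g]eq_sym.
rewrite num_walks_liftS repmx_powS.
by apply: eq_bigr => e _; rewrite IH.
Qed.
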